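(* Let $\mathcal D_2^S$ be the family of all successor expansions of finite 2-pointed directed graphs $(D,s,t)$. The directed reachability query, i.e. the class of structures in $\mathcal D_2^S$ in which there is a directed path from $s$ to $t$, is breadth-first traversal-invariant definable over $\mathcal D_2^S$.
   Context: A 2-pointed directed graph $(D,s,t)$ is a finite directed graph (binary relation $E$) with two distinguished vertices. A successor expansion of it is $(D,s,t,\min,\max,S)$ where $S$ is a unary function which is the successor function of some linear order of the vertex set with least element $\min$ and greatest element $\max$; its signature is denoted $(\Gamma_2,S)$. Graphs (as targets) are finite and undirected; $\Gamma_n$ is the signature with a binary relation symbol $E$ and $n$ constants; an $n$-pointed graph is a graph with $n$ distinguished vertices. A linear order $<$ of the vertex set of a graph, listing vertices $v_1<\dots<v_n$, is a breadth-first traversal (BFT) if for each $i\ge2$, whenever some $v_j$ with $j<i$ has a neighbour outside $\{v_1,\dots,v_{i-1}\}$, $v_i$ is adjacent to $v_{j^*}$ for the least such $j^*$ (a visiting order of breadth-first search). Equivalently: for all $u<v<w$, $uEw$ implies some $x<v$ with $x\le u$ has $xEv$. A $k$-ary interpretation $\pi:\Gamma_n\to K$ consists of a first-order $K$-formula $\partial^\pi(\bar x)$ in a $k$-tuple of variables, a $K$-formula $E^\pi(\bar x,\bar y)$, and for each constant a definition by cases (cases $K$-formulas, values $k$-tuples of $K$-terms); $A^\pi$ has domain $\{\bar a\in A^k:A\models\partial^\pi(\bar a)\}$ and symbols interpreted by their translations. $\pi$ is left total from $\mathcal K$ to $\mathcal G'$ if $A^\pi\in\mathcal G'$ for all $A\in\mathcal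 K$. For a family $\mathcal G'$ of finite $n$-pointed graphs let $\mathcal B$ be the family of expansions $(G,<)$ with $G\in\mathcal G'$ and $<$ a BFT of $G$. A $\Gamma_n\cup\{<\}$-sentence $\varphi$ is $(\mathcal G',\mathcal B)$-invariant if $(G,<)\models\varphi\iff(H,<')\models\varphi$ whenever $(G,<),(H,<')\in\mathcal B$ and $G\cong H$; then $G\models(\mathfrak B<)\varphi$ means $(G,<)\models\varphi$ for some (equivalently every) BFT. A query $Q$ (isomorphism-closed subfamily) over a family $\mathcal K$ of $K$-structures is basic BFT-invariant definable if there are $n$, a family $\mathcal G'$ of finite $n$-pointed graphs, a $(\mathcal G',\mathcal B)$-invariant sentence $\varphi$ and an interpretation $\pi:\Gamma_n\to K$ left total from $\mathcal K$ to $\mathcal G'$ with $A\in Q\iff A^\pi\models(\mathfrak B<)\varphi$ for all $A\in\mathcal K$; $Q$ is BFT-invariant definable if it is a boolean combination of such queries. *)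

From mathcomp Require Import all_boot.
Set Implicit Arguments.
Unset Strict Implicit.
Unset Printing Implicit Defensive.

Record sstruct := SStruct {
  sV : finType;
  sE : rel sV;
  s_s : sV; s_t : sV; s_min : sV; s_max : sV;
  sS : sV -> sV }.
Arguments sE : clear implicits.
Arguments sS : clear implicits.

(* S is the successor function of a linear order (given by the
   enumeration [l]) with least element min and greatest element max;
   convention: S max = max. *)
Definition is_succ_expansion (A : sstruct) : Prop :=
  exists l : seq (sV A),
    [/\ uniq l, (forall v, v \in l),
        index (s_min A) l = 0 /\
        index (s_max A) l = (size l).-1,
        (forall u, index u l < (size l).-1 ->
                   index (sS A u) l = (index u l).+1) &
        sS A (s_max A) = s_max A].

Definition D2S (A : sstruct) : Prop := is_succ_expansion A.

Inductive sterm := SVar of nat | Ts | Tt | Tmin | Tmax | TSucc of sterm.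
Inductive sform :=
  | SEq of sterm & sterm
  | SEdge of sterm & sterm
  | SNot of sform
  | SAnd of sform & sform
  | SEx of nat & sform.

(* closed terms (used as values in definitions by cases) *)
Inductive cterm := Cs | Ct | Cmin | Cmax | CSucc of cterm.

Definition upd (T : Type) (e : nat -> option T) (x : nat) (v : T) :=
  fun y => if y == x then Some v else e y.

Section SourceSem.
Variable A : sstruct.

Fixpoint seval (e : nat -> option (sV A)) (t : sterm) : option (sV A) :=
  match t with
  | SVar x => e x
  | Ts => Some (s_s A) | Tt => Some (s_t A)
  | Tmin => Some (s_min A) | Tmax => Some (s_max A)
  | TSucc t => omap (sS A) (seval e t)
  end.

Fixpoint ssat (e : nat -> option (sV A)) (f : sform) : bool :=
  match f with
  | SEq t1 t2 => if (seval e t1, seval e t2) is (Some a, Some b)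
                 then a == b else false
  | SEdge t1 t2 => if (seval e t1, seval e t2) is (Some a, Some b)
                   then sE A a b else false
  | SNot f => ~~ ssat e f
  | SAnd f g => ssat e f && ssat e g
  | SEx x f => [exists v : sV A, ssat (upd e x v) f]
  end.

Fixpoint ceval (t : cterm) : sV A :=
  match t with
  | Cs => s_s A | Ct => s_t A | Cmin => s_min A | Cmax => s_max A
  | CSucc t => sS A (ceval t)
  end.

Definition env0 : nat -> option (sV A) := fun _ => None.

End SourceSem.

Record npgraph (np : nat) := NPGraph {
  gV : finType;
  gE : rel gV;
  gc : 'I_np -> gV }.
Arguments gE {np} G : rename.
Arguments gc {np} G : rename.

Definition is_graph n (G : npgraph n) : Prop :=
  irreflexive (gE G) /\ symmetric (gE G).

Definition np_iso n (G H : npgraph n) : Prop :=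
  exists f : gV G -> gV H,
    [/\ bijective f,
        (forall x y, gE H (f x) (f y) = gE G x y) &
        (forall i, f (gc G i) = gc H i)].

(* A linear order of the vertex set is represented by the enumeration
   l = [v_1; ...; v_m]; x < y iff index x l < index y l. *)
Definition is_enum (T : finType) (l : seq T) := uniq l /\ forall v, v \in l.

(* breadth-first traversal: for each v = v_i (i >= 2), if some earlier
   vertex has a neighbour outside {v_1..v_{i-1}}, then v_i is adjacent to
   the least such earlier vertex u = v_{j*}. *)
Definition is_BFT n (G : npgraph n) (l : seq (gV G)) : Prop :=
  is_enum l /\
  forall u v, index u l < index v l ->
    (exists w, gE G u w /\ index v l <= index w l) ->
    (forall u', index u' l < index u l ->
       forall w, gE G u' w -> index w l < index v l) ->
    gE G u v.

Inductive tterm (n : nat) := TVar of nat | TConst of 'I_n.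
Inductive tform (n : nat) :=
  | TEq of tterm n & tterm n
  | TEdge of tterm n & tterm n
  | TLt of tterm n & tterm n
  | TNot of tform n
  | TAnd of tform n & tform n
  | TEx of nat & tform n.

Section TargetSem.
Variables (n : nat) (G : npgraph n) (l : seq (gV G)).

Definition teval (e : nat -> option (gV G)) (t : tterm n) : option (gV G) :=
  match t with TVar x => e x | TConst i => Some (gc G i) end.

Fixpoint tsat (e : nat -> option (gV G)) (f : tform n) : bool :=
  match f with
  | TEq t1 t2 => if (teval e t1, teval e t2) is (Some a, Some b)
                 then a == b else false
  | TEdge t1 t2 => if (teval e t1, teval e t2) is (Some a, Some b)
                   then gE G a b else false
  | TLt t1 t2 => if (teval e t1, teval e t2) is (Some a, Some b)
                 then index a l < index b l else false
  | TNot f => ~~ tsat e f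
  | TAnd f g => tsat e f && tsat e g
  | TEx x f => [exists v : gV G, tsat (upd e x v) f]
  end.

End TargetSem.

Definition tenv0 n (G : npgraph n) : nat -> option (gV G) := fun _ => None.

Definition bsat n (G : npgraph n) (l : seq (gV G)) (phi : tform n) : bool :=
  tsat l (tenv0 G) phi.

Definition bft_invariant n (G' : npgraph n -> Prop) (phi : tform n) : Prop :=
  forall (G H : npgraph n) (l : seq (gV G)) (l' : seq (gV H)),
    G' G -> G' H -> is_BFT l -> is_BFT l' -> np_iso G H ->
    (bsat l phi <-> bsat l' phi).

Definition bft_models n (G : npgraph n) (phi : tform n) : Prop :=
  exists l : seq (gV G), is_BFT l /\ bsat l phi.

(* The domain formula uses variables 0..k-1 (for x-bar); the edge formula
   uses 0..k-1 for x-bar and k..2k-1 for y-bar.  Each constant c_i is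
   defined by cases: a list of (case sentence, k-tuple of closed terms). *)
Record interp (k n : nat) := Interp {
  i_dom : sform;
  i_edge : sform;
  i_cases : 'I_n -> seq (sform * ('I_k -> cterm)) }.

Section Interp.
Variables (k n : nat) (pi : interp k n) (A : sstruct).

Definition env1 (a : {ffun 'I_k -> sV A}) : nat -> option (sV A) :=
  fun i => omap a (insub i).
Definition env2 (a b : {ffun 'I_k -> sV A}) : nat -> option (sV A) :=
  fun i => if i < k then omap a (insub i) else omap b (insub (i - k)).

Definition in_dom (a : {ffun 'I_k -> sV A}) : bool := ssat (env1 a) (i_dom pi).

Definition dom_type := {a : {ffun 'I_k -> sV A} | in_dom a}.

(* the case that holds (well-defined when exactly one case holds) *)
Definition case_holds (c : sform * ('I_k -> cterm)) : bool :=
  ssat (env0 A) c.1.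

Definition const_val (i : 'I_n) : {ffun 'I_k -> sV A} :=
  let cs := i_cases pi i in
  let c := nth (SNot (SEq Tmin Tmin), fun _ => Cmin) cs (find case_holds cs) in
  [ffun j => ceval A (c.2 j)].

Definition cases_ok : Prop :=
  forall i, count case_holds (i_cases pi i) = 1.

Definition interp_struct (H : forall i, in_dom (const_val i)) : npgraph n :=
  @NPGraph n dom_type
    (fun a b => ssat (env2 (val a) (val b)) (i_edge pi))
    (fun i => exist _ (const_val i) (H i)).

End Interp.

Definition left_total k n (pi : interp k n) (K : sstruct -> Prop)
    (G' : npgraph n -> Prop) : Prop :=
  forall A, K A ->
    cases_ok pi A /\
    exists H : (forall i, in_dom pi (const_val pi A i)),
      G' (interp_struct H).

Definition basic_bft_definable (K : sstruct -> Prop) (Q : sstruct -> Prop)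
  : Prop :=
  exists (n : nat) (G' : npgraph n -> Prop) (phi : tform n) (k : nat)
         (pi : interp k n),
    [/\ (forall G, G' G -> is_graph G),
        bft_invariant G' phi,
        left_total pi K G' &
        forall A (HA : K A) (H : forall i, in_dom pi (const_val pi A i)),
          Q A <-> bft_models (interp_struct H) phi].

Inductive bft_definable (K : sstruct -> Prop) : (sstruct -> Prop) -> Prop :=
  | bftd_basic Q : basic_bft_definable K Q -> bft_definable K Q
  | bftd_not Q : bft_definable K Q -> bft_definable K (fun A => ~ Q A)
  | bftd_and Q1 Q2 : bft_definable K Q1 -> bft_definable K Q2 ->
      bft_definable K (fun A => Q1 A /\ Q2 A)
  | bftd_ext Q Q' : bft_definable K Q ->
      (forall A, K A -> (Q A <-> Q' A)) -> bft_definable K Q'.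

Definition reach_query (A : sstruct) : Prop := connect (sE A) (s_s A) (s_t A).

From mathcomp Require Import all_boot zify.
Set Implicit Arguments. Unset Strict Implicit. Unset Printing Implicit Defensive.

(* Unfold D into an undirected graph: a root and three copies, tagged (min,max),
   (max,min) and (max,max), of the layers 1..N of the successor order, where
   (u,i) is joined to (v,i+1) if u = v or u -> v, the root to (v,1) if v = s or
   s -> v, and a cap of each copy to (s,N).  Measured from a vertex r outside a
   copy, at distance d from the root, the copy of (t,N) is within distance d+N
   exactly when t is reachable from s, while the cap is at distance d+N+1.
   A breadth-first traversal lists each component by increasing distance from
   its first vertex r, so t is reachable iff, in a copy avoiding r, (t,N) comes
   before the cap with no new component started in between.  As r lies in at
   most one copy, the majority answer of the three copies is correct. *)

(** * Breadth-first traversals *)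

Section Ball.
Variables (T : finType) (e : rel T).

Fixpoint ball (r : T) (m : nat) (y : T) : bool :=
  if m is m'.+1 then ball r m' y || [exists z, ball r m' z && e z y]
  else y == r.

Lemma ball0 r y : ball r 0 y = (y == r).
Proof. by []. Qed.

Lemma ballS r m y : ball r m.+1 y = ball r m y || [exists z, ball r m z && e z y].
Proof. by []. Qed.

Lemma ball_mono r m m' y : m <= m' -> ball r m y -> ball r m' y.
Proof.
elim: m' => [|m' IH]; first by rewrite leqn0 => /eqP ->.
by rewrite leq_eqVlt => /orP [/eqP -> // | /IH h /h /= ->].
Qed.

Lemma ball_step r m z y : ball r m z -> e z y -> ball r m.+1 y.
Proof. by move=> bz ezy /=; apply/orP; right; apply/existsP; exists z; rewrite bz. Qed.

Lemma ball_connect r m y : ball r m y -> connect e r y.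
Proof.
elim: m y => [|m IH] y /=; first by move/eqP ->.
case/orP => [/IH // | /existsP [z /andP [bz ezy]]].
exact: connect_trans (IH _ bz) (connect1 ezy).
Qed.

Lemma path_ball r p : path e r p -> ball r (size p) (last r p).
Proof.
elim/last_ind: p => [|p z IH] /=; first by rewrite eqxx.
rewrite rcons_path last_rcons size_rcons => /andP [/IH bp ez].
exact: ball_step bp ez.
Qed.

Lemma connect_ball r y : connect e r y -> ball r #|T|.-1 y.
Proof.
case/connectP => p pr ->; case/shortenP: pr => p' pr' up' _.
apply: ball_mono (path_ball pr').
have := max_card (mem (r :: p')); rewrite (card_uniqP up') /=; lia.
Qed.

End Ball.

Section BFT.
Variables (n : nat) (G : npgraph n) (l : seq (gV G)).
Local Notation idx x := (index x l).
Local Notation e := (gE G).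

Definition bft_root z := forall w, idx w < idx z -> ~~ e w z.

Hypothesis bft_l : is_BFT l.

Lemma bft_index_inj x y : idx x = idx y -> x = y.
Proof. by have [_ all_l] := bft_l.1; apply: index_inj. Qed.

Lemma bft_frontier u w b : idx u < idx b -> e u w -> idx b <= idx w ->
  exists2 u0, idx u0 <= idx u & e u0 b.
Proof.
move=> ub euw bw.
pose P u := (idx u < idx b) && [exists w, e u w && (idx b <= idx w)].
have Pu : P u by rewrite /P ub; apply/existsP; exists w; rewrite euw.
case: (arg_minnP (fun u => idx u) Pu) => u0 /andP [u0b /existsP [w0 /andP [eu0 bw0]]] min0.
exists u0; first exact: min0.
apply: (bft_l.2 _ _ u0b); first by exists w0.
move=> u' u'u0 w' eu'w'; rewrite ltnNge; apply/negP => bw'.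
have : P u' by rewrite /P (ltn_trans u'u0 u0b); apply/existsP; exists w'; rewrite eu'w'.
by move/min0; rewrite leqNgt u'u0.
Qed.

Lemma bft_root_closed z u w : bft_root z -> idx u < idx z -> e u w -> idx w < idx z.
Proof.
move=> rz uz euw; rewrite ltnNge; apply/negP => zw.
have [u0 u0u eu0z] := bft_frontier uz euw zw.
by move: (rz u0 (leq_ltn_trans u0u uz)); rewrite eu0z.
Qed.

Lemma ball_before_root z r m y : bft_root z -> idx r < idx z -> ball e r m y ->
  idx y < idx z.
Proof.
move=> root_z rz; elim: m y => [|m IH] y /=; first by move/eqP ->.
case/orP => [/IH // | /existsP [w /andP [bw ewy]]].
exact: bft_root_closed root_z (IH _ bw) ewy.
Qed.

Lemma bft_ball_downward r m a b : bft_root r -> ball e r m a ->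
  idx r <= idx b -> idx b <= idx a -> ball e r m b.
Proof.
move=> rr; elim: m a b => [|m IH] a b /=.
  by move/eqP -> => rb br; apply/eqP/bft_index_inj/eqP; rewrite eqn_leq br rb.
case/orP => [bma rb ba | /existsP [z /andP [bz eza]] rb ba]; first by rewrite (IH a).
case: (leqP (idx b) (idx z)) => [bz' | zb]; first by rewrite (IH z).
have [u0 u0z eu0b] := bft_frontier zb eza ba.
have ru0 : idx r <= idx u0.
  by rewrite leqNgt; apply/negP => /(bft_root_closed rr)/(_ eu0b); rewrite ltnNge rb.
by apply/orP; right; apply/existsP; exists u0; rewrite eu0b (IH z).
Qed.

End BFT.

Section BFTExists.
Variables (n : nat) (G : npgraph n).
Local Notation e := (gE G).

(* Vertices outside [p] have index [size p], so they count as coming after [p]. *)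
Definition bft_prefix (p : seq (gV G)) := uniq p /\
  forall u v, v \in p -> index u p < index v p ->
    (exists w, e u w /\ index v p <= index w p) ->
    (forall u', index u' p < index u p -> forall w, e u' w -> index w p < index v p) ->
    e u v.

Definition bft_next (p : seq (gV G)) x :=
  forall u, u \in p -> (exists w, e u w /\ w \notin p) ->
    (forall u', index u' p < index u p -> forall w, e u' w -> w \in p) -> e u x.

Lemma bft_next_exists p x0 : x0 \notin p -> exists2 x, x \notin p & bft_next p x.
Proof.
move=> x0p; pose P u := (u \in p) && [exists w, e u w && (w \notin p)].
case: (pickP P) => [u0 Pu0 | noP]; last first.
  exists x0 => // u up [w [euw wp]] _.
  by move: (noP u); rewrite /P up => /negbT/existsPn/(_ w); rewrite euw wp.
case: (arg_minnP (index^~ p) Pu0) => u /andP [up /existsP [x /andP [eux xp]]] minu.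
exists x => // u' u'p [w' [eu'w' w'p]] hu'.
have Pu' : P u' by rewrite /P u'p; apply/existsP; exists w'; rewrite eu'w'.
have := minu _ Pu'; rewrite leq_eqVlt => /orP [/eqP iu | lt].
  by rewrite -(index_inj u up u'p iu).
by move: (hu' _ lt _ eux); rewrite (negbTE xp).
Qed.

Lemma bft_prefix_rcons p x : bft_prefix p -> x \notin p -> bft_next p x ->
  bft_prefix (rcons p x).
Proof.
move=> [up hp] xp hx; split=> [|u v]; first by rewrite rcons_uniq xp.
have idxE y : y \in p -> index y (rcons p x) = index y p.
  by move=> yp; rewrite -cats1 index_cat yp.
have in_p y : (index y (rcons p x) < size p) = (y \in p).
  case: (boolP (y \in p)) => yp; first by rewrite idxE ?index_mem.
  by rewrite -cats1 index_cat (negbTE yp) ltnNge leq_addr.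
have before_in y v' : index y p < index v' p -> v' \in p -> y \in p.
  by move=> yv vp; rewrite -index_mem (ltn_trans yv) // index_mem.
rewrite mem_rcons inE => /predU1P [-> | vp].
  have -> : index x (rcons p x) = size p by rewrite -cats1 index_pivot.
  move=> ux [w [euw xw]] hu'.
  have uip : u \in p by rewrite -in_p.
  apply: hx => //; first by exists w; split => //; rewrite -in_p -leqNgt.
  move=> u' u'u w' ew'; rewrite -in_p; apply: hu' ew'.
  by rewrite !idxE // (before_in _ _ u'u).
rewrite (idxE _ vp) => uv.
have uip : u \in p by rewrite -in_p (ltn_trans uv) ?index_mem.
rewrite (idxE _ uip) in uv * => -[w [euw vw]] hu'.
apply: hp => //.
  exists w; split => //; case: (boolP (w \in p)) => wp; first by rewrite -(idxE _ wp).
  by rewrite (memNindex wp) index_size.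
move=> u' u'u w' ew'.
have u'p := before_in _ _ u'u uip.
have := hu' u' _ w' ew'; rewrite idxE // => /(_ u'u) w'v.
have w'p : w' \in p by rewrite -in_p (ltn_trans w'v) ?index_mem.
by rewrite -(idxE _ w'p).
Qed.

Lemma bft_exists : exists l : seq (gV G), is_BFT l.
Proof.
have grow k : k <= #|gV G| -> exists2 p, bft_prefix p & size p = k.
  elim: k => [|k IH] hk; first by exists [::] => //; split => // u v.
  have [p pp sp] := IH (ltnW hk).
  case: (pickP [predC p]) => [x0 x0p | allp].
    have [x xp nx] := bft_next_exists x0p.
    by exists (rcons p x); [apply: bft_prefix_rcons | rewrite size_rcons sp].
  have : #|gV G| <= size p.
    rewrite -(card_uniqP pp.1); apply/eq_leq/eq_card => x.
    by move/negbFE: (allp x) => ->.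
  by rewrite sp leqNgt hk.
have [p [up hp] sp] := grow _ (leqnn _).
have all_p v : v \in p.
  apply/negPn/negP => vp; have /card_uniqP vpu : uniq (v :: p) by rewrite /= vp.
  by have := max_card (mem (v :: p)); rewrite vpu /= sp ltnn.
by exists p; split=> [|u v]; [split | apply: hp].
Qed.

End BFTExists.

Section Iso.
Variables (n : nat) (G H : npgraph n) (f : gV G -> gV H).
Hypotheses (f_bij : bijective f) (f_edge : forall x y, gE H (f x) (f y) = gE G x y)
  (f_const : forall i, f (gc G i) = gc H i).

Lemma teval_iso e1 e2 t : (forall x, e2 x = omap f (e1 x)) ->
  teval e2 t = omap f (teval e1 t).
Proof. by case: t => [x|i] h //=; rewrite f_const. Qed.

Lemma tsat_iso (l : seq (gV G)) phi e1 e2 : (forall x, e2 x = omap f (e1 x)) ->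
  tsat l e1 phi = tsat (map f l) e2 phi.
Proof.
have f_inj := bij_inj f_bij; have [g fK gK] := f_bij.
elim: phi e1 e2 => [t1 t2|t1 t2|t1 t2|p IH|p IHp q IHq|x p IH] e1 e2 h /=;
  rewrite ?(teval_iso t1 h) ?(teval_iso t2 h).
- by case: (teval e1 t1) => [a|]; case: (teval e1 t2) => [b|] //=; rewrite (inj_eq f_inj).
- by case: (teval e1 t1) => [a|]; case: (teval e1 t2) => [b|] //=; rewrite f_edge.
- by case: (teval e1 t1) => [a|]; case: (teval e1 t2) => [b|] //=; rewrite !index_map.
- by rewrite (IH e1 e2).
- by rewrite (IHp e1 e2) // (IHq e1 e2).
apply/existsP/existsP => [[v hv] | [v hv]].
  by exists (f v); rewrite -(IH (upd e1 x v)) // => y; rewrite /upd; case: (y == x).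
exists (g v); rewrite (IH _ (upd e2 x v)) // => y.
by rewrite /upd; case: (y == x) => //=; rewrite gK.
Qed.

Lemma bsat_iso (l : seq (gV G)) phi : bsat l phi = bsat (map f l) phi.
Proof. exact: tsat_iso. Qed.

Lemma is_BFT_iso (l : seq (gV G)) : is_BFT l -> is_BFT (map f l).
Proof.
have f_inj := bij_inj f_bij; have [g fK gK] := f_bij.
move=> [[ul all_l] hl]; split.
  by split=> [|v]; [rewrite map_inj_uniq | rewrite -(gK v) map_f].
move=> u v; rewrite -(gK u) -(gK v) !index_map // f_edge => uv [w [ew vw]] hu'.
apply: hl => //.
  by exists (g w); move: ew vw; rewrite -{1 2}(gK w) f_edge index_map.
move=> u' u'u w' eu'w'.
by have := hu' (f u'); rewrite index_map // => /(_ u'u (f w')); rewrite f_edge index_map //; apply.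
Qed.

End Iso.

(** * The interpretation *)

Fixpoint sterm_below (b : nat) (t : sterm) : bool :=
  match t with SVar x => x < b | TSucc t => sterm_below b t | _ => true end.

Fixpoint qf_below (b : nat) (f : sform) : bool :=
  match f with
  | SEq t1 t2 | SEdge t1 t2 => sterm_below b t1 && sterm_below b t2
  | SNot f => qf_below b f
  | SAnd f g => qf_below b f && qf_below b g
  | SEx _ _ => false
  end.

Lemma ssat_qf_ext (A : sstruct) b (e1 e2 : nat -> option (sV A)) f : qf_below b f ->
  (forall x, x < b -> e1 x = e2 x) -> ssat e1 f = ssat e2 f.
Proof.
move=> hf he; have ht t : sterm_below b t -> seval e1 t = seval e2 t.
  by elim: t => //= t IH /IH ->.
elim: f hf => //= [t1 t2|t1 t2|f IH|f IHf g IHg].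
- by case/andP => /ht -> /ht ->.
- by case/andP => /ht -> /ht ->.
- by move/IH ->.
- by case/andP => /IHf -> /IHg ->.
Qed.

Definition STrue := SEq Tmin Tmin.
Definition SOr f g := SNot (SAnd (SNot f) (SNot g)).
Definition SNeq t1 t2 := SNot (SEq t1 t2).
Definition SEdgeOrEq t1 t2 := SOr (SEdge t1 t2) (SEq t1 t2).
Definition SMinOrMax t := SOr (SEq t Tmin) (SEq t Tmax).

(* Vertices are 5-tuples: the root (min,min,min,s,min) and, in the copy tagged
   (a0,a1), the vertex (a0,a1,min,v,i) of v in layer i <> min (the levels are
   the elements of the successor order) and the cap (a0,a1,max,max,max). *)
Definition RootF (v : nat -> sterm) :=
  SAnd (SEq (v 0) Tmin) (SAnd (SEq (v 1) Tmin) (SAnd (SEq (v 2) Tmin)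
   (SAnd (SEq (v 3) Ts) (SEq (v 4) Tmin)))).
Definition TagF (v : nat -> sterm) :=
  SAnd (SNot (SAnd (SEq (v 0) Tmin) (SEq (v 1) Tmin)))
   (SAnd (SMinOrMax (v 0)) (SMinOrMax (v 1))).
Definition LayerF v := SAnd (TagF v) (SAnd (SEq (v 2) Tmin) (SNeq (v 4) Tmin)).
Definition CapF v :=
  SAnd (TagF v) (SAnd (SEq (v 2) Tmax) (SAnd (SEq (v 3) Tmax) (SEq (v 4) Tmax))).
Definition DomF v := SOr (RootF v) (SOr (LayerF v) (CapF v)).

Definition RootLayerF (x y : nat -> sterm) :=
  SAnd (RootF x) (SAnd (LayerF y) (SAnd (SEq (y 4) (TSucc Tmin)) (SEdgeOrEq Ts (y 3)))).
Definition LayerLayerF (x y : nat -> sterm) :=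
  SAnd (LayerF x) (SAnd (LayerF y) (SAnd (SEq (x 0) (y 0)) (SAnd (SEq (x 1) (y 1))
   (SAnd (SEq (y 4) (TSucc (x 4))) (SAnd (SNeq (x 4) Tmax) (SEdgeOrEq (x 3) (y 3))))))).
Definition LayerCapF (x y : nat -> sterm) :=
  SAnd (LayerF x) (SAnd (CapF y) (SAnd (SEq (x 0) (y 0)) (SAnd (SEq (x 1) (y 1))
   (SAnd (SEq (x 3) Ts) (SEq (x 4) Tmax))))).
Definition ArcF x y := SOr (RootLayerF x y) (SOr (LayerLayerF x y) (LayerCapF x y)).
Definition SameF (x y : nat -> sterm) :=
  SAnd (SEq (x 0) (y 0)) (SAnd (SEq (x 1) (y 1)) (SAnd (SEq (x 2) (y 2))
   (SAnd (SEq (x 3) (y 3)) (SEq (x 4) (y 4))))).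

Definition XV (i : nat) := SVar i.
Definition YV (i : nat) := SVar i.+4.+1.
Definition EdgeF := SAnd (SOr (ArcF XV YV) (ArcF YV XV)) (SNot (SameF XV YV)).

(* Constant 0 is the root, constants 1-3 are the copies of t in the last layer
   and constants 4-6 are the caps. *)
Definition table : seq (seq cterm) :=
  [:: [:: Cmin; Cmin; Cmin; Cs; Cmin];
      [:: Cmin; Cmax; Cmin; Ct; Cmax];
      [:: Cmax; Cmin; Cmin; Ct; Cmax];
      [:: Cmax; Cmax; Cmin; Ct; Cmax];
      [:: Cmin; Cmax; Cmax; Cmax; Cmax];
      [:: Cmax; Cmin; Cmax; Cmax; Cmax];
      [:: Cmax; Cmax; Cmax; Cmax; Cmax]].
Definition table_entry (i : nat) (j : nat) : cterm := nth Cmin (nth [::] table i) j.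

Definition reach_interp : interp 5 7 :=
  @Interp 5 7 (DomF XV) EdgeF (fun i => [:: (STrue, fun j : 'I_5 => table_entry i j)]).

Lemma negb_andNN (x y : bool) : ~~ (~~ x && ~~ y) = x || y.
Proof. by case: x; case: y. Qed.

Section TupleSemantics.
Variable A : sstruct.
Local Notation V := (sV A).
Local Notation mn := (s_min A).
Local Notation mx := (s_max A).
Local Notation ss := (s_s A).
Local Notation S := (sS A).
Local Notation E := (sE A).

Definition envA (a : nat -> V) : nat -> option V := fun i => Some (a i).
Definition envAB (a b : nat -> V) : nat -> option V :=
  fun i => if i is i'.+4.+1 then Some (b i') else Some (a i).

Definition tuple_dom a := ssat (envA a) (DomF XV).
Definition tuple_edge a b := ssat (envAB a b) EdgeF.

Definition copy_tag (p q : V) :=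
  [&& ~~ ((p == mn) && (q == mn)), (p == mn) || (p == mx) & (q == mn) || (q == mx)].
Definition is_root (a : nat -> V) :=
  [&& a 0 == mn, a 1 == mn, a 2 == mn, a 3 == ss & a 4 == mn].
Definition is_layer a := [&& copy_tag (a 0) (a 1), a 2 == mn & a 4 != mn].
Definition is_cap a := [&& copy_tag (a 0) (a 1), a 2 == mx, a 3 == mx & a 4 == mx].
Definition adj_or_eq x y := E x y || (x == y).
Definition root_layer (x y : nat -> V) :=
  [&& is_root x, is_layer y, y 4 == S mn & adj_or_eq ss (y 3)].
Definition layer_layer (x y : nat -> V) :=
  [&& is_layer x, is_layer y, x 0 == y 0, x 1 == y 1, y 4 == S (x 4), x 4 != mx
    & adj_or_eq (x 3) (y 3)].
Definition layer_cap (x y : nat -> V) :=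
  [&& is_layer x, is_cap y, x 0 == y 0, x 1 == y 1, x 3 == ss & x 4 == mx].
Definition tuple_arc x y := [|| root_layer x y, layer_layer x y | layer_cap x y].
Definition differ5 (x y : nat -> V) :=
  ~~ [&& x 0 == y 0, x 1 == y 1, x 2 == y 2, x 3 == y 3 & x 4 == y 4].

Definition agree (a b : nat -> V) := forall i, i < 5 -> a i = b i.

Lemma tuple_domE a : tuple_dom a = [|| is_root a, is_layer a | is_cap a].
Proof. by rewrite /tuple_dom /= !negb_andNN. Qed.

Lemma tuple_edgeE a b : tuple_edge a b = (tuple_arc a b || tuple_arc b a) && differ5 a b.
Proof. by rewrite /tuple_edge /= !negb_andNN. Qed.

Lemma tuple_dom_ext a a' : agree a a' -> tuple_dom a = tuple_dom a'.
Proof. by move=> h; apply: (@ssat_qf_ext A 5) => // x hx; rewrite /envA h. Qed.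

Lemma envAB_lt (a b : nat -> V) x : x < 5 -> envAB a b x = Some (a x).
Proof. by case: x => [|[|[|[|[|x]]]]]. Qed.

Lemma envAB_ge (a b : nat -> V) x : envAB a b (x + 5) = Some (b x).
Proof. by rewrite addnC. Qed.

Lemma tuple_edge_ext a a' b b' : agree a a' -> agree b b' -> tuple_edge a b = tuple_edge a' b'.
Proof.
move=> ha hb; apply: (@ssat_qf_ext A 10) => // x hx.
case: (ltnP x 5) => h; first by rewrite !envAB_lt // ha.
by rewrite -(subnK h) !envAB_ge hb //; lia.
Qed.

Definition acc (f : {ffun 'I_5 -> V}) : nat -> V := fun i => f (inord i).

Lemma omap_insub (f : {ffun 'I_5 -> V}) x : x < 5 -> omap f (insub x) = Some (acc f x).
Proof. by move=> hx; rewrite insubT /acc /=; congr (Some (f _)); apply: val_inj; rewrite /= inordK. Qed.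

Lemma in_domE f : in_dom reach_interp f = tuple_dom (acc f).
Proof. by apply: (@ssat_qf_ext A 5) => // x hx; rewrite /env1 omap_insub. Qed.

Lemma interp_edgeE f g : ssat (env2 f g) (i_edge reach_interp) = tuple_edge (acc f) (acc g).
Proof.
apply: (@ssat_qf_ext A 10) => // x hx; rewrite /env2; case: ifP => h.
  by rewrite omap_insub // envAB_lt.
have h5 : 5 <= x by rewrite leqNgt h.
by rewrite -{2}(subnK h5) envAB_ge omap_insub //; lia.
Qed.

Lemma const_valE (i : 'I_7) j : j < 5 ->
  acc (const_val reach_interp A i) j = ceval A (table_entry i j).
Proof. by move=> hj; rewrite /acc /const_val ffunE /= /case_holds /= eqxx /= inordK. Qed.

Lemma cases_ok_reach : cases_ok reach_interp A.
Proof. by move=> i; rewrite /= /case_holds /= eqxx. Qed.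

End TupleSemantics.

(** * The layered graph *)

Definition succ_enum (A : sstruct) (ls : seq (sV A)) :=
  [/\ uniq ls, forall v, v \in ls, index (s_min A) ls = 0,
      index (s_max A) ls = (size ls).-1 &
      forall u, index u ls < (size ls).-1 -> index (sS A u) ls = (index u ls).+1].

Section SuccOrder.
Variables (A : sstruct) (ls : seq (sV A)).
Local Notation V := (sV A).
Local Notation mn := (s_min A).
Local Notation mx := (s_max A).
Local Notation ss := (s_s A).
Local Notation S := (sS A).
Local Notation E := (sE A).
Hypothesis ls_enum : succ_enum ls.
Let ls_uniq : uniq ls. Proof. by case: ls_enum. Qed.
Let ls_all v : v \in ls. Proof. by case: ls_enum. Qed.
Let ls_min : index mn ls = 0. Proof. by case: ls_enum. Qed.
Let ls_max : index mx ls = (size ls).-1. Proof. by case: ls_enum. Qed.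
Let ls_succ u : index u ls < (size ls).-1 -> index (S u) ls = (index u ls).+1.
Proof. by case: ls_enum => _ _ _ _; apply. Qed.
Local Notation N := (size ls).-1.
Local Notation pos v := (index v ls).

Lemma pos_le v : pos v <= N.
Proof. by rewrite -ltnS (leq_trans _ (leqSpred _)) // index_mem. Qed.

Lemma pos_inj u v : pos u = pos v -> u = v.
Proof. exact: index_inj. Qed.

Lemma pos_succ v : v != mx -> pos (S v) = (pos v).+1.
Proof.
move=> vmx; apply: ls_succ; rewrite ltn_neqAle pos_le andbT -ls_max.
by apply: contra vmx => /eqP/pos_inj ->.
Qed.

Definition level i := nth mn ls i.

Lemma pos_level i : i <= N -> pos (level i) = i.
Proof.
move=> iN; rewrite index_uniq // (leq_ltn_trans iN) // ltn_predL.
by rewrite (leq_ltn_trans (leq0n _) (_ : pos mn < _)) ?index_mem.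
Qed.

Lemma level0 : level 0 = mn.
Proof. by apply: pos_inj; rewrite pos_level. Qed.

Lemma levelN : level N = mx.
Proof. by apply: pos_inj; rewrite pos_level // ls_max. Qed.

Lemma level_neq_min i : 0 < i <= N -> level i != mn.
Proof. by case/andP=> i0 iN; apply/eqP => /(congr1 (index^~ ls)); rewrite pos_level // ls_min; lia. Qed.

Lemma level_neq_max i : i < N -> level i != mx.
Proof.
move=> iN; apply/eqP => /(congr1 (index^~ ls)); rewrite ls_max pos_level ?(ltnW iN) //.
by move=> e; rewrite e ltnn in iN.
Qed.

Lemma succ_level i : i < N -> S (level i) = level i.+1.
Proof. by move=> iN; apply: pos_inj; rewrite pos_succ ?level_neq_max // !pos_level // ltnW. Qed.

Lemma min_eq_max_singleton : mn = mx -> forall v, v = mn.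
Proof.
move=> e v; apply: pos_inj; apply/eqP; rewrite ls_min -leqn0.
by rewrite (leq_trans (pos_le v)) // -ls_max -e ls_min.
Qed.

Lemma connect_ball_top s t : connect E s t -> ball E s N t.
Proof.
move/connect_ball; suff -> : #|V| = size ls by [].
by rewrite -(card_uniqP ls_uniq); apply: eq_card => v; rewrite ls_all.
Qed.

Hypothesis min_neq_max : mn != mx.

Lemma top_level_gt0 : 0 < N.
Proof. by rewrite -ls_max lt0n -ls_min; apply: contra min_neq_max => /eqP/pos_inj ->. Qed.

Lemma pos_succ_min : pos (S mn) = 1.
Proof. by rewrite pos_succ // ls_min. Qed.

Definition depth (a : nat -> V) := if a 2 == mx then N.+1 else pos (a 4).

Lemma edge_into_copy (p q : V) a b : copy_tag p q -> tuple_edge a b ->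
  b 0 = p -> b 1 = q ->
  (is_root a /\ depth b = 1 /\ b 2 = mn /\ adj_or_eq ss (b 3)) \/
  [/\ a 0 = p, a 1 = q &
    (depth b = (depth a).+1 /\ (b 2 = mn -> a 2 = mn /\ adj_or_eq (a 3) (b 3)))
     \/ depth a = (depth b).+1].
Proof.
have nmx : (mn == mx) = false by apply/negbTE.
have nmx' : (mx == mn) = false by rewrite eq_sym.
move=> tg; rewrite tuple_edgeE /depth => /andP [/orP [hf|hf] _] hb0 hb1; case/or3P: hf.
- case/and4P => ra /and3P [_ /eqP b2 _] /eqP b4 eo; left.
  by rewrite b2 nmx b4 pos_succ_min.
- case/and5P => /and3P [_ /eqP a2 _] /and3P [_ /eqP b2 _] /eqP a0 /eqP a1 /and3P [/eqP b4 a4 eo].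
  by right; split; rewrite -?hb0 -?hb1 //; left; rewrite a2 b2 nmx b4 pos_succ.
- case/and5P => /and3P [_ /eqP a2 _] /and4P [_ /eqP b2 _ _] /eqP a0 /eqP a1 /andP [_ /eqP a4].
  right; split; rewrite -?hb0 -?hb1 //; left.
  by rewrite a2 b2 nmx eqxx a4 ls_max; split => // h; move: min_neq_max; rewrite -h -b2 eqxx.
- case/and4P => /and5P [/eqP b0 /eqP b1 _ _ _] _ _ _.
  by move: tg; rewrite /copy_tag -hb0 -hb1 b0 b1 eqxx.
- case/and5P => /and3P [_ /eqP b2 _] /and3P [_ /eqP a2 _] /eqP a0 /eqP a1 /and3P [/eqP b4 a4 eo].
  by right; split; rewrite -?hb0 -?hb1 //; right; rewrite a2 b2 nmx b4 pos_succ.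
- case/and5P => /and3P [_ /eqP b2 _] /and4P [_ /eqP a2 _ _] /eqP a0 /eqP a1 /andP [_ /eqP b4].
  by right; split; rewrite -?hb0 -?hb1 //; right; rewrite a2 b2 nmx eqxx b4 ls_max.
Qed.

End SuccOrder.
Arguments level : simpl never.

Section Unfolding.
Variables (A : sstruct) (ls : seq (sV A)).
Local Notation V := (sV A).
Local Notation mn := (s_min A).
Local Notation mx := (s_max A).
Local Notation ss := (s_s A).
Local Notation st := (s_t A).
Local Notation S := (sS A).
Local Notation E := (sE A).
Hypotheses (ls_enum : succ_enum ls) (min_neq_max : mn != mx).
Local Notation N := (size ls).-1.
Local Notation level := (level ls).
Variable HD : forall i, in_dom reach_interp (const_val reach_interp A i).
Local Notation G := (interp_struct HD).
Local Notation gv := (gV G).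

Definition av (x : gv) : nat -> V := acc (val x).
Definition tup (x0 x1 x2 x3 x4 : V) : nat -> V :=
  fun i => nth mn [:: x0; x1; x2; x3; x4] i.

Lemma gE_av x y : gE G x y = tuple_edge (av x) (av y).
Proof. exact: interp_edgeE. Qed.

Lemma gE_agree x y a b : agree (av x) a -> agree (av y) b -> gE G x y = tuple_edge a b.
Proof. by move=> hx hy; rewrite gE_av (tuple_edge_ext hx hy). Qed.

Lemma av_inj x y : agree (av x) (av y) -> x = y.
Proof.
move=> h; apply: val_inj; apply/ffunP => j.
by have := h j (ltn_ord j); rewrite /av /acc inord_val.
Qed.

Lemma av_const i c0 c1 c2 c3 c4 : i < 7 -> nth [::] table i = [:: c0; c1; c2; c3; c4] ->
  agree (av (gc G (inord i)))
    (tup (ceval A c0) (ceval A c1) (ceval A c2) (ceval A c3) (ceval A c4)).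
Proof.
move=> hi ti j hj; rewrite /av const_valE // /table_entry inordK // ti.
by case: j hj => [|[|[|[|[|j]]]]].
Qed.

Lemma tuple_vertex_proof a : tuple_dom a -> @in_dom 5 7 reach_interp A [ffun j : 'I_5 => a j].
Proof.
move=> h; rewrite in_domE -(tuple_dom_ext (a := a)) // => i hi.
by rewrite /acc ffunE inordK.
Qed.

Definition tuple_vertex a (h : tuple_dom a) : gv :=
  @exist _ (@in_dom 5 7 reach_interp A) _ (tuple_vertex_proof h).

Lemma av_tuple_vertex a (h : tuple_dom a) : agree (av (tuple_vertex h)) a.
Proof. by move=> i hi; rewrite /av /acc /= ffunE inordK. Qed.

Lemma gE_sym : symmetric (gE G).
Proof.
move=> x y; rewrite !gE_av !tuple_edgeE orbC; congr (_ && _).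
by rewrite /differ5 ![av y _ == _]eq_sym.
Qed.

Lemma gE_irr : irreflexive (gE G).
Proof. by move=> x; rewrite gE_av tuple_edgeE /differ5 !eqxx andbF. Qed.

Definition rootv := gc G (inord 0).

Lemma av_rootv : agree (av rootv) (tup mn mn mn ss mn).
Proof. exact: (av_const (i := 0) isT erefl). Qed.

Section CopyEdges.
Variables (p q : V) (tg : copy_tag p q).

Lemma layer_dom v i : 0 < i <= N -> tuple_dom (tup p q mn v (level i)).
Proof. by move=> hi; rewrite tuple_domE /is_layer /= tg eqxx level_neq_min ?orbT. Qed.

Lemma edge_root_layer v y : adj_or_eq ss v ->
  agree (av y) (tup p q mn v (level 1)) -> gE G rootv y.
Proof.
have N1 := top_level_gt0 ls_enum min_neq_max.
have l1 := level_neq_min ls_enum (i := 1) N1.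
rewrite -(succ_level ls_enum N1) (level0 ls_enum) in l1 * => eo hy.
rewrite (gE_agree av_rootv hy) tuple_edgeE; apply/andP; split.
  by rewrite /tuple_arc /root_layer /is_root /is_layer /= !eqxx tg l1 eo.
by rewrite /differ5 /tup /= [mn == S mn]eq_sym (negbTE l1) !andbF.
Qed.

Lemma edge_layer_layer u v i y' y : adj_or_eq u v -> 0 < i -> i < N ->
  agree (av y') (tup p q mn u (level i)) ->
  agree (av y) (tup p q mn v (level i.+1)) -> gE G y' y.
Proof.
move=> eo i0 iN.
have li : level i != mn by apply: level_neq_min; rewrite // i0 (ltnW iN).
have li' : level i.+1 != mn by apply: level_neq_min; rewrite // iN.
have lmx := level_neq_max ls_enum iN.
rewrite -(succ_level ls_enum iN) in li' * => hy' hy.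
rewrite (gE_agree hy' hy) tuple_edgeE; apply/andP; split.
  by rewrite /tuple_arc /layer_layer /is_layer /= !eqxx tg li li' lmx eo ?orbT.
rewrite /differ5 /tup /=; apply/negP => /and5P [_ _ _ _ /eqP/(congr1 (index^~ ls))].
by rewrite (pos_succ ls_enum lmx) => /n_Sn.
Qed.

Lemma edge_layer_cap y' y : agree (av y') (tup p q mn ss mx) ->
  agree (av y) (tup p q mx mx mx) -> gE G y' y.
Proof.
have nmx : (mx == mn) = false by rewrite eq_sym; apply/negbTE.
move=> hy' hy; rewrite (gE_agree hy' hy) tuple_edgeE; apply/andP; split.
  by rewrite /tuple_arc /layer_cap /is_layer /is_cap /= !eqxx tg nmx !orbT.
by rewrite /differ5 /tup /= eq_sym nmx !andbF.
Qed.

End CopyEdges.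

Section Traversal.
Variables (l : seq gv) (bft_l : is_BFT l).
Local Notation idx x := (index x l).
Local Notation ballG := (ball (gE G)).
Local Notation depth := (depth ls).

Definition comp_root := [arg min_(x < rootv | connect (gE G) x rootv) idx x].

Lemma comp_root_spec : connect (gE G) comp_root rootv /\
  forall x, connect (gE G) x rootv -> idx comp_root <= idx x.
Proof. by rewrite /comp_root; case: arg_minnP => [|x hx hmin]; [exact: connect0 | split]. Qed.

Lemma bft_root_comp_root : bft_root l comp_root.
Proof.
move=> w hw; apply/negP => ew.
have := comp_root_spec.2 _ (connect_trans (connect1 ew) comp_root_spec.1).
by rewrite leqNgt hw.
Qed.

Lemma comp_root_first x : connect (gE G) comp_root x -> idx comp_root <= idx x.
Proof.
move=> h; apply: comp_root_spec.2; rewrite (sym_connect_sym gE_sym) in h.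
exact: connect_trans h comp_root_spec.1.
Qed.

Definition root_dist :=
  ex_minn (ex_intro (fun m => ballG comp_root m rootv) _ (connect_ball comp_root_spec.1)).

Lemma root_dist_spec : ballG comp_root root_dist rootv /\
  forall k, ballG comp_root k rootv -> root_dist <= k.
Proof. by rewrite /root_dist; case: ex_minnP. Qed.

Section Copy.
Variables (p q : V) (tg : copy_tag p q).

Lemma ball_layer i v y : 0 < i <= N -> ball E ss i v ->
  agree (av y) (tup p q mn v (level i)) -> ballG comp_root (root_dist + i) y.
Proof.
have [bd _] := root_dist_spec.
elim: i v y => [//|i IH] v y /andP [_ iN] bv hy.
have [u bu uv] : exists2 u, ball E ss i u & adj_or_eq u v.
  move: bv; rewrite ballS => /orP [bv | /existsP [u /andP [bu euv]]].
    by exists v; rewrite // /adj_or_eq eqxx orbT.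
  by exists u; rewrite // /adj_or_eq euv.
rewrite addnS; case: (posnP i) => [i0 | ipos].
  move: bu uv hy; rewrite i0 addn0 ball0 => /eqP -> uv hy.
  exact: ball_step bd (edge_root_layer tg uv hy).
have ilev : 0 < i <= N by rewrite ipos ltnW.
have hu := av_tuple_vertex (layer_dom tg u ilev).
exact: ball_step (IH u _ ilev bu hu) (edge_layer_layer tg uv ipos iN hu hy).
Qed.

Lemma ball_cap T : agree (av T) (tup p q mx mx mx) -> ballG comp_root (root_dist + N).+1 T.
Proof.
have N1 := top_level_gt0 ls_enum min_neq_max.
have Nlev : 0 < N <= N by rewrite N1 leqnn.
have hs := av_tuple_vertex (layer_dom tg ss Nlev).
move=> hT; apply: ball_step (ball_layer Nlev _ hs) (edge_layer_cap tg _ hT).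
  exact: ball_mono (leq0n N) (eqxx ss).
by move=> i hi; rewrite hs // (levelN ls_enum).
Qed.

Lemma ball_target t : agree (av t) (tup p q mn st mx) -> connect E ss st ->
  ballG comp_root (root_dist + N) t.
Proof.
have N1 := top_level_gt0 ls_enum min_neq_max.
move=> ht /(connect_ball_top ls_enum) hc; apply: (ball_layer _ hc); first by rewrite N1 leqnn.
by rewrite (levelN ls_enum).
Qed.

Hypothesis root_off_copy : ~ (av comp_root 0 = p /\ av comp_root 1 = q).

(* Walks from [comp_root] enter the copy through [rootv], whence (ii); one of
   length at most [root_dist + depth y + 1] cannot afford a step back to a
   smaller depth, so it traces a walk of D from s to the vertex of y (iii). *)
Lemma ball_copy_inv m y : ballG comp_root m y -> av y 0 = p -> av y 1 = q ->
  [/\ depth (av y) <= m, ballG comp_root (m - depth (av y)) rootv &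
      (av y 2 = mn -> m <= root_dist + depth (av y) + 1 -> connect E ss (av y 3))].
Proof.
have [bd min_d] := root_dist_spec.
elim: m y => [|m IH] y; rewrite ?ball0 ?ballS.
  by move/eqP -> => h0 h1; case: root_off_copy.
case/orP => [bmy | /existsP [z /andP [bz ezy]]] h0 h1.
  have [a b c] := IH y bmy h0 h1; split; first exact: leq_trans a _.
    by apply: ball_mono b; rewrite leq_sub2r.
  by move=> h2 h3; apply: c h2 _; apply: leq_trans h3.
have ezy_tuple : tuple_edge (av z) (av y) by rewrite -gE_av; exact: ezy.
have [[rz [dy [y2 eo]]] | [z0 z1 [[dy hz] | dz]]] :=
  edge_into_copy ls_enum min_neq_max tg ezy_tuple h0 h1.
- have zr : z = rootv.
    apply: av_inj => i hi; rewrite av_rootv //.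
    by case/and5P: rz => /eqP ? /eqP ? /eqP ? /eqP ? /eqP ?; case: i hi => [|[|[|[|[|i]]]]].
  subst z; rewrite dy subSS subn0; split => // _ _.
  by case/orP: eo => [/connect1 // | /eqP <-]; exact: connect0.
- have [a b c] := IH z bz z0 z1; rewrite dy subSS; split => // h2 h3.
  have [z2 eo] := hz h2; move: h3; rewrite addn1 ltnS addnS -addn1 => /(c z2) cz.
  by case/orP: eo => [/connect1 | /eqP <-] //; apply: connect_trans.
- have [a b c] := IH z bz z0 z1; rewrite dz in a b; split.
  + exact: leqW (ltnW a).
  + by apply: ball_mono b; clear -a; lia.
  + by move=> _ h3; have := min_d _ b; clear -a h3; lia.
Qed.

Lemma copy_test_iff t T : agree (av t) (tup p q mn st mx) ->
  agree (av T) (tup p q mx mx mx) ->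
  (idx t < idx T /\ forall z, idx t < idx z -> idx z <= idx T -> ~ bft_root l z)
  <-> connect E ss st.
Proof.
have [_ _ _ ls_max _] := ls_enum.
move=> ht hT.
have dT : depth (av T) = N.+1 by rewrite /depth hT //= eqxx.
have dt : depth (av t) = N by rewrite /depth ht //= (negbTE min_neq_max) ht //= ls_max.
have bT := ball_cap hT; have rT := comp_root_first (ball_connect bT).
split => [[tT no_root] | reach].
  have rt : idx comp_root <= idx t.
    by rewrite leqNgt; apply/negP => h; apply: (no_root _ h rT bft_root_comp_root).
  have bt := bft_ball_downward bft_l bft_root_comp_root bT rt (ltnW tT).
  have [_ _ c] := ball_copy_inv bt (ht 0 isT) (ht 1 isT).
  by have := c (ht 2 isT); rewrite dt ht //; apply; lia.
have bt := ball_target ht reach; have rt := comp_root_first (ball_connect bt).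
have nbT : ~~ ballG comp_root (root_dist + N) T.
  apply/negP => b; have [a b' _] := ball_copy_inv b (hT 0 isT) (hT 1 isT).
  by rewrite dT in a b'; have := root_dist_spec.2 _ b'; lia.
split.
  by rewrite ltnNge; apply: contra nbT; exact: (bft_ball_downward bft_l bft_root_comp_root bt rT).
move=> z tz zT rz.
by have := ball_before_root bft_l rz (leq_ltn_trans rt tz) bT; rewrite ltnNge zT.
Qed.

End Copy.
End Traversal.
End Unfolding.

(** * The sentence *)

Definition TC (k : nat) : tterm 7 := TConst (inord k).
Definition TOr (f g : tform 7) := TNot (TAnd (TNot f) (TNot g)).
Definition BftRootF : tform 7 :=
  TNot (TEx 1 (TAnd (TLt (TVar 7 1) (TVar 7 0)) (TEdge (TVar 7 1) (TVar 7 0)))).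
Definition TestF (j : nat) : tform 7 :=
  TAnd (TLt (TC j) (TC j.+3))
   (TNot (TEx 0 (TAnd (TLt (TC j) (TVar 7 0))
      (TAnd (TOr (TLt (TVar 7 0) (TC j.+3)) (TEq (TVar 7 0) (TC j.+3))) BftRootF)))).
Definition MajF (a b c : tform 7) := TOr (TAnd a b) (TOr (TAnd a c) (TAnd b c)).

(* The first disjunct only fires on one-element structures, where all the
   constants collapse. *)
Definition reachF : tform 7 := TOr (TEq (TC 0) (TC 1)) (MajF (TestF 1) (TestF 2) (TestF 3)).

Definition maj (a b c : bool) := [|| a && b, a && c | b && c].

Section ReachFSemantics.
Variables (G : npgraph 7) (l : seq (gV G)).
Local Notation idx x := (index x l).
Local Notation cG k := (gc G (inord k)).

Definition testb (j : nat) :=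
  (idx (cG j) < idx (cG j.+3)) &&
  ~~ [exists z, [&& idx (cG j) < idx z, ~~ (~~ (idx z < idx (cG j.+3)) && (z != cG j.+3))
       & ~~ [exists w, (idx w < idx z) && gE G w z]]].

Lemma bsat_reachF : bsat l reachF = (cG 0 == cG 1) || maj (testb 1) (testb 2) (testb 3).
Proof. by rewrite /bsat /reachF /= !negb_andNN. Qed.

Lemma testbP (bft_l : is_BFT l) j :
  reflect (idx (cG j) < idx (cG j.+3) /\
           forall z, idx (cG j) < idx z -> idx z <= idx (cG j.+3) -> ~ bft_root l z)
    (testb j).
Proof.
have leE z : ~~ (~~ (idx z < idx (cG j.+3)) && (z != cG j.+3)) = (idx z <= idx (cG j.+3)).
  by rewrite negb_andNN (leq_eqVlt (idx z)) orbC; congr (_ || _); apply/eqP/eqP => [-> | /(bft_index_inj bft_l)].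
apply: (iffP andP) => -[jT no_root]; split=> //.
  move=> z jz zT rz; move/existsPn/(_ z): no_root; rewrite jz leE zT /= negbK => /existsP [w /andP [wz ewz]].
  by move: (rz w wz); rewrite ewz.
apply/existsPn => z; apply/negP => /and3P [jz zT /existsPn rz].
apply: (no_root z jz); first by rewrite -leE.
by move=> w wz; move: (rz w); rewrite wz.
Qed.

End ReachFSemantics.

Section Correctness.
Variables (A : sstruct) (ls : seq (sV A)).
Local Notation mn := (s_min A).
Local Notation mx := (s_max A).
Local Notation E := (sE A).
Hypotheses (ls_enum : succ_enum ls) (min_neq_max : mn != mx).
Variable HD : forall i, in_dom reach_interp (const_val reach_interp A i).
Local Notation G := (interp_struct HD).
Variables (l : seq (gV G)) (bft_l : is_BFT l).
Local Notation cG k := (gc G (inord k)).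

Lemma testb_copy j p q : copy_tag p q ->
  agree (av (cG j)) (tup p q mn (s_t A) mx) -> agree (av (cG j.+3)) (tup p q mx mx mx) ->
  ~ (av (comp_root l) 0 = p /\ av (comp_root l) 1 = q) ->
  testb l j = connect E (s_s A) (s_t A).
Proof.
move=> tg ht hT off.
have [to_reach of_reach] := copy_test_iff ls_enum min_neq_max bft_l tg off ht hT.
by apply/(testbP bft_l j)/idP.
Qed.

Lemma bsat_reachF_connect : bsat l reachF = connect E (s_s A) (s_t A).
Proof.
have nmx : (mx == mn) = false by rewrite eq_sym; apply/negbTE.
have tag1 : copy_tag mn mx by rewrite /copy_tag !eqxx nmx !orbT.
have tag2 : copy_tag mx mn by rewrite /copy_tag !eqxx nmx !orbT.
have tag3 : copy_tag mx mx by rewrite /copy_tag !eqxx nmx !orbT.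
have test1 := testb_copy tag1 (av_const HD (i := 1) isT erefl) (av_const HD (i := 4) isT erefl).
have test2 := testb_copy tag2 (av_const HD (i := 2) isT erefl) (av_const HD (i := 5) isT erefl).
have test3 := testb_copy tag3 (av_const HD (i := 3) isT erefl) (av_const HD (i := 6) isT erefl).
rewrite bsat_reachF; have -> : (cG 0 == cG 1) = false.
  apply/negbTE/negP => /eqP c01; move: (av_const HD (i := 1) isT erefl (isT : 1 < 5)).
  by rewrite -c01 (av_const HD (i := 0) isT erefl) //= => /eqP; rewrite eq_sym nmx.
set x := av (comp_root l) 0; set y := av (comp_root l) 1.
have off p q : x != p \/ y != q -> ~ (x = p /\ y = q) by case=> /eqP ne [].
case: (eqVneq x mn) => [x_mn | x_mn].
  have x_mx : x != mx by rewrite x_mn eq_sym nmx.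
  rewrite (test2 (off _ _ (or_introl x_mx))) (test3 (off _ _ (or_introl x_mx))).
  by move: (testb l 1) (connect _ _ _) => [] [].
rewrite (test1 (off _ _ (or_introl x_mn))).
case: (eqVneq y mn) => [y_mn | y_mn].
  have y_mx : y != mx by rewrite y_mn eq_sym nmx.
  by rewrite (test3 (off _ _ (or_intror y_mx))); move: (testb l 2) (connect _ _ _) => [] [].
by rewrite (test2 (off _ _ (or_intror y_mn))); move: (testb l 3) (connect _ _ _) => [] [].
Qed.

End Correctness.

Lemma D2S_succ_enum A : D2S A -> exists ls : seq (sV A), succ_enum ls.
Proof. by case=> ls [? ? [? ?] ? _]; exists ls. Qed.

Lemma const_in_dom A : D2S A -> forall i, in_dom reach_interp (const_val reach_interp A i).
Proof.
case/D2S_succ_enum => ls ls_enum i.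
rewrite in_domE (tuple_dom_ext (a' := fun j => ceval A (table_entry i j))); last first.
  by move=> j hj; rewrite const_valE.
rewrite tuple_domE; case: (eqVneq (s_min A) (s_max A)) => [e | ne].
  have all_eq x y : x == y :> sV A.
    by rewrite (min_eq_max_singleton ls_enum e x) (min_eq_max_singleton ls_enum e y).
  by rewrite /is_root !all_eq.
have n1 : (s_min A == s_max A) = false by apply/negbTE.
have n2 : (s_max A == s_min A) = false by rewrite eq_sym.
by case: i => [[|[|[|[|[|[|[|i]]]]]]] hi] //=;
  rewrite /is_root /is_layer /is_cap /copy_tag /= ?eqxx ?n1 ?n2.
Qed.

Lemma bsat_reachF_reach A (HA : D2S A)
    (HD : forall i, in_dom reach_interp (const_val reach_interp A i))
    (l : seq (gV (interp_struct HD))) :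
  is_BFT l -> bsat l reachF = connect (sE A) (s_s A) (s_t A).
Proof.
move=> bft_l; have [ls ls_enum] := D2S_succ_enum HA.
case: (eqVneq (s_min A) (s_max A)) => [e | ne]; last by have := bsat_reachF_connect ls_enum ne bft_l.
have single := min_eq_max_singleton ls_enum e.
rewrite [s_t A]single [s_s A]single connect0 bsat_reachF.
suff -> : gc (interp_struct HD) (inord 0) = gc _ (inord 1) by rewrite eqxx.
by apply: av_inj => j hj; rewrite [LHS]single [RHS]single.
Qed.

Definition reachF_stable (G : npgraph 7) : Prop :=
  is_graph G /\ forall l l' : seq (gV G), is_BFT l -> is_BFT l' -> bsat l reachF = bsat l' reachF.

Theorem corollary1 : bft_definable D2S reach_query.
Proof.
apply: bftd_basic; exists 7, reachF_stable, reachF, 5, reach_interp; split.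
- by move=> G [].
- move=> G H l l' _ [_ stable_H] bl bl' [f [f_bij f_edge f_const]].
  by rewrite (bsat_iso f_bij f_edge f_const) (stable_H _ _ (is_BFT_iso f_bij f_edge bl) bl').
- move=> A HA; split; first exact: cases_ok_reach.
  exists (const_in_dom HA); split; first by split; [exact: gE_irr | exact: gE_sym].
  by move=> l l' bl bl'; rewrite !(bsat_reachF_reach HA).
move=> A HA HD; have [l bl] := bft_exists (interp_struct HD).
split=> [reach | [l' [bl' sat]]]; first by exists l; rewrite (bsat_reachF_reach HA).
by rewrite (bsat_reachF_reach HA) in sat.
Qed.
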